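(* Let $a\in(0,\infty)$, $\psi:[0,a]\to\mathbb{R}$, and $0=a_0<a_1<\dots<a_M=a$ a partition such that for each $m$ the restriction $\psi|_{A_m}$ of $\psi$ to $A_m=(a_{m-1},a_m)$ is continuous and strictly monotonic; let $R_m=\psi|_{A_m}(A_m)$. Let $W\sim\mathcal{U}(0,a)$. Then for all $x\in\mathbb{R}$, $$F_{\psi(W)}(x)=\frac1a\Big\{\sum_{m\in I_x}\big(\psi|_{A_m}^{-1}(x)-a_{m-1}\big)+\sum_{m\in D_x}\big(a_m-\psi|_{A_m}^{-1}(x)\big)+\sum_{m\in O_x}(a_m-a_{m-1})\Big\},$$ where $I_x=\{m:\psi|_{A_m}\text{ is increasing and }x\in R_m\}$, $D_x=\{m:\psi|_{A_m}\text{ is decreasing and }x\in R_m\}$, and $O_x=\{m:x\notin R_m,\ R_m\subset(-\infty,x]\}$.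
   Context: $F_{\psi(W)}$ denotes the distribution function of $\psi(W)$. *)

From HB Require Import structures.
From mathcomp Require Import all_boot all_order all_algebra.
From mathcomp Require Import all_classical all_reals all_analysis.
Set Implicit Arguments. Unset Strict Implicit. Unset Printing Implicit Defensive.
Import Order.TTheory GRing.Theory Num.Theory.
Local Open Scope classical_set_scope.
Local Open Scope ring_scope.

Definition piece (R : realType) (s : nat -> R) (m : nat) : set R :=
  `]s m.-1, s m[%classic.

Definition strinc_on (R : realType) (psi : R -> R) (A : set R) : Prop :=
  forall u v, A u -> A v -> u < v -> psi u < psi v.
Definition strdec_on (R : realType) (psi : R -> R) (A : set R) : Prop :=
  forall u v, A u -> A v -> u < v -> psi v < psi u.

(* (psi|_A)^{-1}(x): the (unique, when psi is injective on A and x \in psi @` A)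
   point y of A with psi y = x; an arbitrary value (0) otherwise. *)
Definition restr_inv (R : realType) (psi : R -> R) (A : set R) (x : R) : R :=
  xget 0 [set y | A y /\ psi y = x].

From HB Require Import structures.
From mathcomp Require Import all_boot all_order all_algebra.
From mathcomp Require Import all_classical all_reals all_analysis.
Set Implicit Arguments. Unset Strict Implicit. Unset Printing Implicit Defensive.
Import Order.TTheory GRing.Theory Num.Theory numFieldTopology.Exports.
Local Open Scope classical_set_scope.
Local Open Scope ring_scope.

(* On a piece A_m, where psi is continuous and strictly monotone, the points
   with psi <= x form an interval: ]a_{m-1}, c] or [c, a_m[ with
   c = psi|_{A_m}^{-1}(x) when x is a value of psi on A_m, all of A_m when
   psi <= x there, and otherwise the empty set: psi then exceeds x somewhere
   on A_m, hence everywhere by the intermediate value theorem.  The pieces are disjoint and cover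
   [0, a] up to the finitely many breakpoints, a Lebesgue-null set, and W has
   density 1/a on [0, a]. *)

Lemma restr_invP (R : realType) (psi : R -> R) (A : set R) (x : R) :
  (psi @` A) x -> A (restr_inv psi A x) /\ psi (restr_inv psi A x) = x.
Proof.
by case=> y Ay psiy; apply: (@xgetPex _ 0 [set y | A y /\ psi y = x]); exists y.
Qed.

Lemma uniform_probE (R : realType) (a b : R) (ab : a < b) (E : set R) :
  measurable E -> E `<=` `[a, b] ->
  uniform_prob ab E = ((b - a)^-1%:E * lebesgue_measure E)%E.
Proof.
move=> mE Eab; rewrite /uniform_prob (eq_integral (cst (b - a)^-1%:E)).
  by rewrite integral_cst.
by move=> y /[!inE] /Eab; rewrite /uniform_pdf /= in_itv /= => ->.
Qed.

Section sublevel_on_interval.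
Context (R : realType) (psi : R -> R) (u v x : R).
Local Notation A := `]u, v[%classic.
Local Notation S := (`]u, v[%classic `&` [set y | psi y <= x]).

Let inA y : A y = (u < y < v). Proof. by rewrite /= in_itv. Qed.

Hypothesis uv : u < v.

Lemma strinc_strdec_excl : ~ (strinc_on psi A /\ strdec_on psi A).
Proof.
move=> [inc dec].
have [um mv] := midf_lt uv; have [mm' m'v] := midf_lt mv.
have Am : A ((u + v) / 2) by rewrite inA um mv.
have Am' : A (((u + v) / 2 + v) / 2) by rewrite inA (lt_trans um mm') m'v.
by have := lt_trans (inc _ _ Am Am' mm') (dec _ _ Am Am' mm'); rewrite ltxx.
Qed.

Lemma strinc_sublevelE c :
  strinc_on psi A -> A c -> psi c = x -> S = `]u, c]%classic.
Proof.
move=> inc Ac psic; have := Ac; rewrite inA => /andP[uc cv].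
apply/seteqP; split => y.
  move=> [Ay psiy] /=; rewrite in_itv /=.
  have := Ay; rewrite inA => /andP[-> _] /=.
  by rewrite leNgt; apply/negP => /(inc _ _ Ac Ay); rewrite psic ltNge psiy.
rewrite /= in_itv /= => /andP[uy yc].
have Ay : A y by rewrite inA uy (le_lt_trans yc cv).
split=> //; rewrite -psic; move: yc; rewrite le_eqVlt => /predU1P[-> //|yc].
exact/ltW/inc.
Qed.

Lemma strdec_sublevelE c :
  strdec_on psi A -> A c -> psi c = x -> S = `[c, v[%classic.
Proof.
move=> dec Ac psic; have := Ac; rewrite inA => /andP[uc cv].
apply/seteqP; split => y.
  move=> [Ay psiy] /=; rewrite in_itv /=.
  have := Ay; rewrite inA => /andP[_ ->]; rewrite andbT.
  by rewrite leNgt; apply/negP => /(dec _ _ Ay Ac); rewrite psic ltNge psiy.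
rewrite /= in_itv /= => /andP[cy yv].
have Ay : A y by rewrite inA yv (lt_le_trans uc cy).
split=> //; rewrite -psic; move: cy; rewrite le_eqVlt => /predU1P[<- //|cy].
exact/ltW/dec.
Qed.

Definition piece_sublevel_length : R :=
  (if `[< strinc_on psi A /\ (psi @` A) x >]
   then restr_inv psi A x - u else 0)
  + (if `[< strdec_on psi A /\ (psi @` A) x >]
     then v - restr_inv psi A x else 0)
  + (if `[< ~ (psi @` A) x /\ psi @` A `<=` [set y | y <= x] >]
     then v - u else 0).

Hypothesis psi_cont : {within A, continuous psi}.

Lemma IVT_itvoo y z : A y -> A z ->
  Num.min (psi y) (psi z) <= x <= Num.max (psi y) (psi z) -> (psi @` A) x.
Proof.
wlog yz : y z / y <= z.
  move=> wlog_yz Ay Az; have [yz|zy] := leP y z; first exact: wlog_yz yz Ay Az.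
  by rewrite minC maxC; exact: wlog_yz (ltW zy) Az Ay.
move=> Ay Az xyz.
have yzA : `[y, z] `<=` A.
  move=> t; rewrite /= !in_itv /= => /andP[yt tz].
  move: Ay Az; rewrite !inA => /andP[uy _] /andP[_ zv].
  by rewrite (lt_le_trans uy yt) (le_lt_trans tz zv).
have [c yzc psic] := IVT yz (continuous_subspaceW yzA psi_cont) xyz.
by exists c => //; exact: yzA.
Qed.

Lemma sublevel_set0 : ~ (psi @` A) x -> ~ (psi @` A `<=` [set y | y <= x]) ->
  S = set0.
Proof.
move=> xNA /existsNP[_ /not_implyP[[z Az <-] /negP]]; rewrite -ltNge => xz.
apply/seteqP; split => // y [Ay] /=; rewrite le_eqVlt => /predU1P[psiy|yx].
  by apply: xNA; exists y.
apply: xNA; apply: (IVT_itvoo Ay Az).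
by rewrite ge_min le_max (ltW yx) (ltW xz) orbT.
Qed.

Hypothesis psi_mono : strinc_on psi A \/ strdec_on psi A.

Lemma lebesgue_piece_sublevel :
  measurable S /\ lebesgue_measure S = piece_sublevel_length%:E.
Proof.
rewrite /piece_sublevel_length.
have [[inc xA]|Ninc] := pselect (strinc_on psi A /\ (psi @` A) x).
  have [Ac psic] := restr_invP xA; have := Ac; rewrite inA => /andP[uc _].
  have Ndec : ~ (strdec_on psi A /\ (psi @` A) x).
    by move=> [dec _]; apply: strinc_strdec_excl.
  rewrite asboolT // asboolF // asboolF /=; last by case.
  rewrite (strinc_sublevelE inc Ac psic) lebesgue_measure_itv /= lte_fin uc.
  by rewrite !addr0 -EFinD.
have [[dec xA]|Ndec] := pselect (strdec_on psi A /\ (psi @` A) x).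
  have [Ac psic] := restr_invP xA; have := Ac; rewrite inA => /andP[_ cv].
  rewrite asboolF // asboolT // asboolF /=; last by case.
  rewrite (strdec_sublevelE dec Ac psic) lebesgue_measure_itv /= lte_fin cv.
  by rewrite add0r addr0 -EFinD.
have xNA : ~ (psi @` A) x.
  by case: psi_mono => mono xA; [apply: Ninc|apply: Ndec].
rewrite asboolF // asboolF // !add0r.
have [Ale|Nle] := pselect (psi @` A `<=` [set y | y <= x]).
  rewrite asboolT //; have -> : S = A.
    by rewrite setIidl // => y Ay; apply: Ale; exists y.
  by rewrite lebesgue_measure_itv /= lte_fin uv -EFinD.
by rewrite asboolF; [rewrite sublevel_set0 // measure0 | case].
Qed.

End sublevel_on_interval.

Lemma partition_cover (R : realType) (s : nat -> R) n y :
  s 0%N <= y <= s n ->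
  (exists2 k, (k <= n)%N & y = s k) \/
  (exists2 m, (0 < m <= n)%N & piece s m y).
Proof.
elim: n => [|n IH] /andP[s0y yn].
  by left; exists 0%N => //; apply/eqP; rewrite eq_le yn s0y.
have [yn'|ny] := leP y (s n).
  case: IH; first by rewrite s0y yn'.
    by move=> [k kn ->]; left; exists k => //; exact: leqW.
  by move=> [m /andP[m0 mn] my]; right; exists m; rewrite ?m0 ?leqW.
move: yn; rewrite le_eqVlt => /predU1P[->|yn]; first by left; exists n.+1.
right; exists n.+1; first by rewrite /= leqnn.
by rewrite /piece /= in_itv /= ny yn.
Qed.

Section partition.
Context (R : realType) (s : nat -> R) (M : nat).
Hypothesis s_incr : forall m, (0 < m <= M)%N -> s m.-1 < s m.

Lemma partition_le i j : (i <= j <= M)%N -> s i <= s j.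
Proof.
elim: j => [|j IH] /andP[ij jM]; first by move: ij; rewrite leqn0 => /eqP ->.
move: ij; rewrite leq_eqVlt => /predU1P[-> //|ij].
apply: le_trans (IH _) (ltW (@s_incr j.+1 _)); first by rewrite -ltnS ij ltnW.
by rewrite jM.
Qed.

Lemma piece_disjoint m n y : (0 < m <= M)%N -> (0 < n <= M)%N ->
  piece s m y -> piece s n y -> m = n.
Proof.
wlog mn : m n / (m <= n)%N.
  move=> wlog_mn mM nM ym yn; have [mn|/ltnW nm] := leqP m n.
    exact: wlog_mn mn mM nM ym yn.
  exact/esym/(wlog_mn _ _ nm nM mM yn ym).
move=> _ /andP[n0 nM]; rewrite /piece /= !in_itv /=.
move=> /andP[_ ym] /andP[yn _]; apply/eqP; rewrite eqn_leq mn /= leqNgt.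
apply/negP => nm; have : s m <= s n.-1.
  by apply: partition_le; rewrite -ltnS prednK // nm (leq_trans (leq_pred n)).
by move=> /(lt_le_trans ym)/(lt_trans yn); rewrite ltxx.
Qed.

Context (psi : R -> R) (x : R).
Hypothesis psi_cont : forall m, (0 < m <= M)%N ->
  {within piece s m, continuous psi}.
Hypothesis psi_mono : forall m, (0 < m <= M)%N ->
  strinc_on psi (piece s m) \/ strdec_on psi (piece s m).

Lemma lebesgue_sublevel_partition :
  measurable [set y | s 0%N <= y <= s M /\ psi y <= x] /\
  lebesgue_measure [set y | s 0%N <= y <= s M /\ psi y <= x] =
  (\sum_(1 <= m < M.+1) piece_sublevel_length psi (s m.-1) (s m) x)%:E.
Proof.
set E := [set y | _ /\ _].
pose F k := piece s k.+1 `&` [set y | psi y <= x].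
have kM k : (k < M)%N -> (0 < k.+1 <= M)%N by [].
have F_lebesgue k : (k < M)%N -> measurable (F k) /\
    lebesgue_measure (F k) = (piece_sublevel_length psi (s k) (s k.+1) x)%:E.
  move=> /kM k1M.
  exact: lebesgue_piece_sublevel (s_incr k1M) (psi_cont k1M) (psi_mono k1M).
have mF (i : 'I_M) : measurable (F i) by exact: (F_lebesgue _ (ltn_ord i)).1.
have tF : trivIset setT (fun i : 'I_M => F i).
  move=> i j _ _ [y [[Fi _] [Fj _]]]; apply/val_inj/succn_inj.
  exact: piece_disjoint (kM _ (ltn_ord i)) (kM _ (ltn_ord j)) Fi Fj.
set U := \big[setU/set0]_(i < M) F i.
have UE : U `<=` E.
  rewrite /U -bigcup_mkord => y [k /= kM' [Fk psiy]]; split => //.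
  move: Fk; rewrite /piece /= in_itv /= => /andP[sky yk].
  have s0sk : s 0%N <= s k by apply: partition_le; rewrite leq0n ltnW.
  have sk1sM : s k.+1 <= s M by apply: partition_le; rewrite kM' leqnn.
  by rewrite (le_trans s0sk (ltW sky)) (le_trans (ltW yk) sk1sM).
have EUs : E `\` U `<=` s @` `I_M.+1.
  move=> y [[yb psiy] NUy].
  have [[k kM' ->]|[m /andP[m0 mM] my]] := partition_cover yb.
    by exists k.
  exfalso; apply: NUy; rewrite /U -bigcup_mkord.
  by exists m.-1; [rewrite /= prednK | rewrite /F /= prednK].
have cEU : countable (E `\` U).
  exact/finite_set_countable/(sub_finite_set EUs)/finite_image/finite_II.
have mEU : measurable (E `\` U).
  by apply: countable_measurable cEU => t; exact: measurable_set1.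
have mU : measurable U by exact: bigsetU_measurable.
rewrite -(setDUK UE); split; first exact: measurableU.
rewrite measureU0 //; last exact: countable_lebesgue_measure0.
rewrite measure_bigsetU_ord // -sumEFin big_add1 /= big_mkord.
by apply: eq_bigr => i _; rewrite (F_lebesgue _ (ltn_ord i)).2.
Qed.

End partition.

Theorem propositionA2 (R : realType) (a : R) (a_pos : 0 < a)
  (psi : R -> R) (M : nat) (s : nat -> R)
  (M_pos : (0 < M)%N)
  (s0 : s 0%N = 0) (sM : s M = a)
  (s_incr : forall m : nat, (0 < m <= M)%N -> s m.-1 < s m)
  (psi_cont : forall m : nat, (0 < m <= M)%N ->
     {within piece s m, continuous psi})
  (psi_mono : forall m : nat, (0 < m <= M)%N ->
     strinc_on psi (piece s m) \/ strdec_on psi (piece s m))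
  (d : measure_display) (T : measurableType d) (P : probability T R)
  (W : {RV P >-> R})
  (W_unif : forall A : set R, measurable A ->
     distribution P W A = uniform_prob a_pos A)
  (x : R) :
  P [set t | 0 <= W t <= a /\ psi (W t) <= x] =
  ((a^-1 *
    (\sum_(1 <= m < M.+1 |
            `[< strinc_on psi (piece s m) /\ (psi @` piece s m) x >])
        (restr_inv psi (piece s m) x - s m.-1)
     + \sum_(1 <= m < M.+1 |
            `[< strdec_on psi (piece s m) /\ (psi @` piece s m) x >])
        (s m - restr_inv psi (piece s m) x)
     + \sum_(1 <= m < M.+1 |
            `[< ~ (psi @` piece s m) x /\
                (psi @` piece s m) `<=` [set y | y <= x] >])
        (s m - s m.-1)))%:E)%E.
Proof.
have [mE lamE] := lebesgue_sublevel_partition s_incr x psi_cont psi_mono.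
rewrite s0 sM in mE lamE.
transitivity (distribution P W [set y | 0 <= y <= a /\ psi y <= x]) => //.
rewrite W_unif // uniform_probE //; last by move=> y [ya _]; rewrite /= in_itv.
rewrite lamE subr0 -EFinM; congr (_ * _)%:E.
by rewrite [LHS]big_split [X in X + _ = _]big_split /= -!big_mkcond.
Qed.
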